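(* Let $n\ge 3$. For $1\le a,b\le n$ let $e^A_{a,b}=e_a e_b^T-e_b e_a^T\in\mathfrak{so}(n)$, where $e_1,\dots,e_n$ is the canonical basis of $\mathbf{R}^n$. For $2\le i<j\le n$ let $$E_{i,j}=\{C\in(\mathfrak{so}(n))^n:\ \rho(g^{\theta}_{i,j})(C)=C \text{ for all }\theta\in\mathbf{R}\}.$$ Then: (1) for $n=3$: $\bigcap_{2\le i<j\le n}E_{i,j}=E_{2,3}=\mathrm{span}\{e_2\otimes e^A_{2,1}+e_3\otimes e^A_{3,1},\ e_2\otimes e^A_{3,1}-e_3\otimes e^A_{2,1},\ e_1\otimes e^A_{2,3}\}$; (2) for $n=4$: $\bigcap_{2\le i<j\le n}E_{i,j}=\mathrm{span}\{e_2\otimes e^A_{2,1}+e_3\otimes e^A_{3,1}+e_4\otimes e^A_{4,1},\ e_2\otimes e^A_{3,4}-e_3\otimes e^A_{2,4}+e_4\otimes e^A_{2,3}\}$; (3) for $n\ge 5$: $\bigcap_{2\le i<j\le n}E_{i,j}=\mathrm{span}\{\sum_{k=1}^n e_k\otimes e^A_{k,1}\}$.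
   Context: $\mathfrak{so}(n)$ is the space of real antisymmetric $n\times n$ matrices. Elements of $(\mathfrak{so}(n))^n$ are $n$-tuples $C=(C_1,\dots,C_n)$; for $v\in\mathbf{R}^n$ and $M\in\mathfrak{so}(n)$, $v\otimes M$ denotes the tuple whose $\mu$-th entry is $v_\mu M$. The action $\rho$ of $SO(n)$ on $(\mathfrak{so}(n))^n$ is $\rho(g)(C)_\mu=\sum_{\nu=1}^n [g^{-1}]_{\nu,\mu}\, g\,C_\nu\, g^{-1}$. For $i<j$ and $\theta\in\mathbf{R}$, $g^\theta_{i,j}\in SO(n)$ is the rotation equal to the identity except for the entries $(i,i)=(j,j)=\cos\theta$, $(i,j)=-\sin\theta$, $(j,i)=\sin\theta$. *)

From HB Require Import structures.
From mathcomp Require Import all_boot all_order all_algebra.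
From mathcomp Require Import all_classical all_reals all_analysis.
Set Implicit Arguments. Unset Strict Implicit. Unset Printing Implicit Defensive.
Import Order.TTheory GRing.Theory Num.Theory.
Local Open Scope ring_scope.

Section Defs.
Variable R : realType.

(* Elements of (so(n))^n are represented inside the R-vector space of
   n-tuples of n x n real matrices; antisymmetry is imposed in [in_Eij]. *)
Definition tup (n : nat) := {ffun 'I_n -> 'M[R]_n}.

(* Indices are 1-based natural numbers as in the paper: row i : 'I_n is the
   paper's index i+1. *)
Definition e (n a : nat) : 'cV[R]_n := \col_(i < n) ((i.+1 == a)%N%:R).

Definition eA (n a b : nat) : 'M[R]_n := e n a *m (e n b)^T - e n b *m (e n a)^T.

Definition tens (n : nat) (v : 'cV[R]_n) (M : 'M[R]_n) : tup n :=
  [ffun mu => v mu 0 *: M].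

Definition grot (n i j : nat) (theta : R) : 'M[R]_n :=
  \matrix_(a < n, b < n)
    if (a.+1 == i) && (b.+1 == i) then cos theta
    else if (a.+1 == j) && (b.+1 == j) then cos theta
    else if (a.+1 == i) && (b.+1 == j) then - sin theta
    else if (a.+1 == j) && (b.+1 == i) then sin theta
    else (a == b)%:R.

Definition rho (n : nat) (g : 'M[R]_n) (C : tup n) : tup n :=
  [ffun mu => \sum_(nu < n) (invmx g) nu mu *: (g *m C nu *m invmx g)].

Definition in_son_n (n : nat) (C : tup n) : Prop :=
  forall mu, (C mu)^T = - C mu.

Arguments in_son_n : clear implicits.
Definition in_Eij (n i j : nat) (C : tup n) : Prop :=
  in_son_n n C /\ forall theta : R, rho (grot n i j theta) C = C.
Arguments in_Eij : clear implicits.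

Definition inter_E (n : nat) (C : tup n) : Prop :=
  forall i j : nat, (2 <= i)%N -> (i < j)%N -> (j <= n)%N -> in_Eij n i j C.

End Defs.
Arguments in_Eij {R} n i j C.
Arguments inter_E {R} n C.

From HB Require Import structures.
From mathcomp Require Import all_boot all_order all_algebra.
From mathcomp Require Import all_classical all_reals all_analysis.
From mathcomp Require Import ring lra zify.
Import Order.TTheory GRing.Theory Num.Theory.
Set Implicit Arguments. Unset Strict Implicit. Unset Printing Implicit Defensive.
Local Open Scope ring_scope.

(* An element C of (so(n))^n is a 3-tensor C_{mu a b}, antisymmetric in (a, b), on
   which an orthogonal g acts by g (x) g (x) g.  The half-turn in the plane of two
   axes p, m other than e_1 negates every index equal to p or m, so an entry
   vanishes as soon as such a p occurs an odd number of times and such an m does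
   not occur; the quarter-turn exchanges p and m.  For n >= 5 a free axis m always
   exists, and the only surviving entries are C_{a a 1} = - C_{a 1 a}, all equal:
   C is a multiple of sum_k e_k (x) e^A_{k,1}, which is invariant under every
   rotation fixing e_1.  For n = 4 the triples (mu, a, b) that permute (2, 3, 4)
   have no free axis and contribute the Levi-Civita tensor of e_2, e_3, e_4; for
   n = 3 only the plane (2, 3) is available and the entries are computed directly. *)

Lemma span_ind (K : fieldType) (V : vectType K) (P : V -> Prop) :
  P 0 -> (forall c x y, P x -> P y -> P (c *: x + y)) ->
  forall s, (forall x, x \in s -> P x) -> forall v, v \in << s >>%VS -> P v.
Proof.
move=> P0 Plin; elim=> [|x s IH] Ps v; first by rewrite span_nil memv0 => /eqP ->.
rewrite span_cons => /memv_addP[_ /vlineP[c ->] [y ys ->]].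
apply: Plin; first by apply: Ps; rewrite mem_head.
by apply: IH ys => z zs; apply: Ps; rewrite inE zs orbT.
Qed.

Section Invariants.
Variable R : realType.
Implicit Types t : R.

Lemma sum_delta n (x : 'I_n) (f : 'I_n -> R) : \sum_b (x == b)%:R * f b = f x.
Proof.
rewrite (bigD1 x) //= eqxx mul1r big1 ?addr0 // => b; rewrite eq_sym => /negbTE ->.
exact: mul0r.
Qed.

Lemma sum_delta_r n (x : 'I_n) (f : 'I_n -> R) : \sum_b f b * (x == b)%:R = f x.
Proof. by rewrite -[RHS](sum_delta x); apply: eq_bigr => b _; rewrite mulrC. Qed.

Lemma invmx_orth n (g : 'M[R]_n) : g *m g^T = 1%:M -> invmx g = g^T.
Proof. by move=> gg; have [U _] := mulmx1_unit gg; rewrite -[RHS](mulKmx U) gg mulmx1. Qed.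

Lemma orth_rows n (g : 'M[R]_n) x y : g *m g^T = 1%:M ->
  \sum_nu g x nu * g y nu = (x == y)%:R.
Proof.
move/matrixP/(_ x y); rewrite !mxE => <-.
by apply: eq_bigr => nu _; rewrite mxE.
Qed.

Lemma rho_orthE n (g : 'M[R]_n) (C : tup R n) mu a b : g *m g^T = 1%:M ->
  rho g C mu a b = \sum_nu g mu nu * \sum_be g b be * \sum_al g a al * C nu al be.
Proof.
move/invmx_orth=> gT; rewrite /rho gT ffunE summxE; apply: eq_bigr => nu _.
rewrite !mxE; congr (_ * _).
by apply: eq_bigr => be _; rewrite !mxE mulrC.
Qed.

Section PlaneRotation.
Variables (n : nat) (k l : 'I_n).
Hypothesis neq_kl : k != l.

Definition rotate (t : R) (f : 'I_n -> R) (a : 'I_n) : R :=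
  if a == k then cos t * f k - sin t * f l
  else if a == l then sin t * f k + cos t * f l
  else f a.

Let eq_lk_false : (l == k) = false. Proof. by rewrite eq_sym (negbTE neq_kl). Qed.
Let eq_kl_false : (k == l) = false. Proof. exact: negbTE. Qed.

Lemma grotE t a b : grot n k.+1 l.+1 t a b = rotate t (fun c => (c == b)%:R) a.
Proof.
rewrite mxE !eqSS !val_eqE /rotate.
have [-> | ak] := eqVneq a k; last have [-> | al] := eqVneq a l;
  (have [eb | bk] := eqVneq b k; last have [eb | bl] := eqVneq b l);
  rewrite ?eb ?eqxx ?eq_kl_false ?eq_lk_false ?andbF ?andbT /=; try ring.
Qed.

Lemma grot_mulE t (f : 'I_n -> R) a :
  \sum_b grot n k.+1 l.+1 t a b * f b = rotate t f a.
Proof.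
under eq_bigr => b _ do rewrite grotE.
rewrite /rotate; case: ifP => _; [|case: ifP => _]; last exact: sum_delta.
- under eq_bigr => b _ do rewrite mulrBl -!mulrA.
  by rewrite sumrB -!mulr_sumr !sum_delta.
- under eq_bigr => b _ do rewrite mulrDl -!mulrA.
  by rewrite big_split -!mulr_sumr /= !sum_delta.
Qed.

Lemma grot_orthogonal t : grot n k.+1 l.+1 t *m (grot n k.+1 l.+1 t)^T = 1%:M.
Proof.
apply/matrixP => a b; rewrite !mxE.
under eq_bigr => c _ do rewrite [_^T c b]mxE.
rewrite grot_mulE /rotate !grotE /rotate; have := cos2Dsin2 t.
have [-> | ak] := eqVneq a k; last have [-> | al] := eqVneq a l;
  (have [eb | bk] := eqVneq b k; last have [eb | bl] := eqVneq b l);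
  rewrite ?eb ?eqxx ?eq_kl_false ?eq_lk_false ?(negbTE ak) ?(negbTE al) /=; try nra.
by rewrite eq_sym.
Qed.

Lemma rho_grotE t (C : tup R n) mu a b :
  rho (grot n k.+1 l.+1 t) C mu a b =
  rotate t (fun nu => rotate t (fun be => rotate t (fun al => C nu al be) a) b) mu.
Proof.
rewrite rho_orthE ?grot_orthogonal // -grot_mulE; apply: eq_bigr => nu _.
rewrite -grot_mulE; congr (_ * _); apply: eq_bigr => be _.
by rewrite -grot_mulE.
Qed.

Lemma grot_fix t (a c : 'I_n) : c != k -> c != l ->
  grot n k.+1 l.+1 t a c = (a == c)%:R.
Proof.
move=> /negbTE ck /negbTE cl; rewrite grotE /rotate.
case: ifP => [/eqP->|_]; [|case: ifP => [/eqP->|_]] => //;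
  by rewrite !(eq_sym _ c) ck cl /=; ring.
Qed.

Definition transp (x : 'I_n) : 'I_n := if x == k then l else if x == l then k else x.
Definition sign_pihalf (x : 'I_n) : R := if x == k then -1 else 1.
Definition sign_pi (x : 'I_n) : R := if (x == k) || (x == l) then -1 else 1.

Lemma rotate_pihalf f x : rotate (pi / 2) f x = sign_pihalf x * f (transp x).
Proof.
rewrite /rotate /sign_pihalf /transp cos_pihalf sin_pihalf.
by case: ifP => _; [|case: ifP => _]; ring.
Qed.

Lemma rotate_pi f x : rotate pi f x = sign_pi x * f x.
Proof.
rewrite /rotate /sign_pi cospi sinpi.
by have [->|_] := eqVneq x k; [|have [->|_] := eqVneq x l]; rewrite /=; ring.
Qed.

Lemma quarter_turn_entry (C : tup R n) :
  rho (grot n k.+1 l.+1 (pi / 2)) C = C -> forall mu a b,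
  C mu a b = sign_pihalf mu * sign_pihalf a * sign_pihalf b *
             C (transp mu) (transp a) (transp b).
Proof.
move=> inv mu a b; rewrite -{1}inv rho_grotE.
by rewrite rotate_pihalf /= rotate_pihalf /= rotate_pihalf; ring.
Qed.

Lemma half_turn_entry (C : tup R n) :
  rho (grot n k.+1 l.+1 pi) C = C -> forall mu a b,
  C mu a b = sign_pi mu * sign_pi a * sign_pi b * C mu a b.
Proof.
move=> inv mu a b; rewrite -{1}inv rho_grotE.
by rewrite rotate_pi /= rotate_pi /= rotate_pi; ring.
Qed.
End PlaneRotation.

Lemma sign_piC n (k l x : 'I_n) : sign_pi k l x = sign_pi l k x.
Proof. by rewrite /sign_pi orbC. Qed.

Definition antisym n (C : tup R n) := forall mu a b, C mu b a = - C mu a b.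

Definition rot_invariant n (C : tup R n) :=
  forall k l : 'I_n, (0 < k < l)%N -> forall t, rho (grot n k.+1 l.+1 t) C = C.

Lemma in_sonP n (C : tup R n) : in_son_n C <-> antisym C.
Proof.
split=> [H mu a b | H mu]; last by apply/matrixP => a b; rewrite !mxE H.
by have /matrixP/(_ a b) := H mu; rewrite !mxE.
Qed.

Lemma inter_EP n (C : tup R n) : (2 < n)%N ->
  inter_E n C <-> antisym C /\ rot_invariant C.
Proof.
move=> n3; split=> [H | [/in_sonP C_antisym C_inv] i j i2 ij jn].
  split; first by have [/in_sonP] := H 2%N 3%N isT isT n3.
  by move=> k l /andP[k0 kl]; have [_] := H k.+1 l.+1 k0 kl (ltn_ord l).
case: i i2 ij => // i i2; case: j jn => // j jn; rewrite ltnS => ij.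
split=> //; apply: (C_inv (Ordinal (ltn_trans ij jn)) (Ordinal jn)).
by rewrite /= ij andbT -ltnS.
Qed.

Lemma rho0 n (g : 'M[R]_n) : rho g 0 = 0.
Proof.
apply/ffunP => mu; rewrite !ffunE big1 // => nu _.
by rewrite ffunE mulmx0 mul0mx scaler0.
Qed.

Lemma rho_lin n (g : 'M[R]_n) c (C D : tup R n) :
  rho g (c *: C + D) = c *: rho g C + rho g D.
Proof.
apply/ffunP => mu; rewrite !ffunE scaler_sumr -big_split; apply: eq_bigr => nu _.
by rewrite !ffunE mulmxDr mulmxDl scalerDr -scalemxAr -scalemxAl !scalerA mulrC.
Qed.

Lemma in_Eij0 n i j : in_Eij n i j (0 : tup R n).
Proof. by split=> [mu | t]; rewrite ?rho0 // ffunE trmx0 oppr0. Qed.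

Lemma in_Eij_lin n i j c (C D : tup R n) :
  in_Eij n i j C -> in_Eij n i j D -> in_Eij n i j (c *: C + D).
Proof.
move=> [sC rC] [sD rD]; split=> [mu | t]; last by rewrite rho_lin rC rD.
by rewrite !ffunE linearD linearZ /= sC sD scalerN opprD.
Qed.

Lemma inter_E0 n : inter_E n (0 : tup R n).
Proof. by move=> *; apply: in_Eij0. Qed.

Lemma inter_E_lin n c (C D : tup R n) :
  inter_E n C -> inter_E n D -> inter_E n (c *: C + D).
Proof. by move=> EC ED i j *; apply: in_Eij_lin; [apply: EC | apply: ED]. Qed.

Lemma rot_invariant_sym n (C : tup R n) (k l : 'I_n) : rot_invariant C ->
  (0 < k)%N -> (0 < l)%N -> k != l ->
  (forall t, rho (grot n k.+1 l.+1 t) C = C) \/ (forall t, rho (grot n l.+1 k.+1 t) C = C).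
Proof.
move=> inv k0 l0; case: (ltngtP k l) => [kl|lk|/val_inj->]; last by rewrite eqxx.
- by left; apply: inv; rewrite k0.
- by right; apply: inv; rewrite l0.
Qed.

Lemma half_turn_entry0 n (C : tup R n) (p m mu a b : 'I_n) : rot_invariant C ->
  (0 < p)%N -> (0 < m)%N -> p != m -> m \notin [:: mu; a; b] ->
  (mu == p) (+) (a == p) (+) (b == p) -> C mu a b = 0.
Proof.
move=> inv p0 m0 pm m_notin odd_p.
have E : C mu a b = sign_pi p m mu * sign_pi p m a * sign_pi p m b * C mu a b.
  have [inv_pm | inv_mp] := rot_invariant_sym inv p0 m0 pm.
    exact: half_turn_entry.
  by rewrite !(sign_piC p); apply: half_turn_entry; rewrite // eq_sym.
move: E odd_p m_notin; rewrite /sign_pi !inE !(eq_sym m).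
by case: (mu == p); case: (a == p); case: (b == p); case: (mu == m); case: (a == m);
  case: (b == m) => //= E _ _; lra.
Qed.

Lemma ord_gt0 n (x : 'I_n.+1) : (0 < x)%N = (x != ord0).
Proof. by rewrite lt0n. Qed.

Lemma diag_entry_eq n (C : tup R n.+1) (a b : 'I_n.+1) : rot_invariant C ->
  a != ord0 -> b != ord0 -> C a a ord0 = C b b ord0.
Proof.
move=> inv a0 b0; have [-> // | ab] := eqVneq a b.
suff turn x y : x != y -> x != ord0 -> y != ord0 ->
    (forall t, rho (grot n.+1 x.+1 y.+1 t) C = C) -> C x x ord0 = C y y ord0.
  have [a0' b0'] : (0 < a)%N /\ (0 < b)%N by rewrite !ord_gt0.
  have [inv'|inv'] := rot_invariant_sym inv a0' b0' ab.
    exact: turn.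
  by apply/esym/turn; rewrite // eq_sym.
move=> xy x0 y0 /(_ (pi / 2)) /(quarter_turn_entry xy) ->.
rewrite /sign_pihalf /transp eqxx !(eq_sym ord0) (negbTE x0) (negbTE y0).
by rewrite mulrNN !mul1r.
Qed.

Lemma eAE n a b (x y : 'I_n) :
  eA R n a b x y = (x.+1 == a)%:R * (y.+1 == b)%:R - (x.+1 == b)%:R * (y.+1 == a)%:R.
Proof. by rewrite !mxE !big_ord1 !mxE. Qed.

Lemma tensE n (v : 'cV[R]_n) M mu (x y : 'I_n) : tens v M mu x y = v mu 0 * M x y.
Proof. by rewrite ffunE mxE. Qed.

Definition xi n (nu al be : 'I_n.+1) : R :=
  (nu == al)%:R * (ord0 == be)%:R - (ord0 == al)%:R * (nu == be)%:R.

Lemma xi_antisym n (nu al be : 'I_n.+1) : xi nu be al = - xi nu al be.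
Proof. by rewrite /xi; ring. Qed.

Lemma xi_distinct n (nu al be : 'I_n.+1) : nu != al -> nu != be -> xi nu al be = 0.
Proof. by move=> /negbTE nual /negbTE nube; rewrite /xi nual nube /=; ring. Qed.

Definition Xi n : tup R n := \sum_(1 <= k < n.+1) tens (e R n k) (eA R n k 1).

Lemma XiE n (nu al be : 'I_n.+1) : Xi n.+1 nu al be = xi nu al be.
Proof.
rewrite sum_ffunE summxE.
under eq_bigr => k _ do rewrite tensE mxE eAE.
rewrite (bigD1_seq nu.+1) ?iota_uniq ?mem_index_iota /=; [|by rewrite ltnS ltn_ord|by []].
rewrite big1_seq => [|k /andP[/negbTE kn _]]; last by rewrite eq_sym kn mul0r.
rewrite addr0 eqxx mul1r /xi !eqSS.
by congr (_ * _ - _ * _); congr _%:R; rewrite eq_sym -?val_eqE.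
Qed.

Lemma rho_Xi n (g : 'M[R]_n.+1) : g *m g^T = 1%:M ->
  (forall a, g a ord0 = (a == ord0)%:R) -> rho g (Xi n.+1) = Xi n.+1.
Proof.
move=> gg g0; apply/ffunP => mu; apply/matrixP => a b.
have inner nu be : \sum_al g a al * Xi n.+1 nu al be =
    g a nu * (ord0 == be)%:R - g a ord0 * (nu == be)%:R.
  under eq_bigr => al _ do rewrite XiE /xi mulrBr !mulrA.
  by rewrite sumrB -!mulr_suml !sum_delta_r.
have middle nu : \sum_be g b be * \sum_al g a al * Xi n.+1 nu al be =
    g a nu * g b ord0 - g a ord0 * g b nu.
  under eq_bigr => be _ do rewrite inner mulrBr !(mulrCA (g b be)).
  by rewrite sumrB -!mulr_sumr !sum_delta_r.
rewrite rho_orthE //.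
under eq_bigr => nu _ do rewrite middle !g0 mulrBr mulrA (mulrCA (g mu nu)).
rewrite sumrB -mulr_suml -mulr_sumr !orth_rows // XiE /xi.
by rewrite !(eq_sym ord0) (eq_sym b); ring.
Qed.

Lemma Xi_antisym n : antisym (Xi n.+1).
Proof. by move=> mu a b; rewrite !XiE xi_antisym. Qed.

Lemma Xi_rot_invariant n : rot_invariant (Xi n.+1).
Proof.
move=> k l /andP[k0 kl] t; have l0 := ltn_trans k0 kl.
have neq_kl : k != l by rewrite neq_ltn kl.
apply: rho_Xi; first exact: grot_orthogonal.
by move=> a; apply: (grot_fix neq_kl); rewrite eq_sym -ord_gt0.
Qed.

Lemma exists_notin n (s : seq 'I_n) : (#|s| < n)%N -> exists m, m \notin s.
Proof.
move=> small; apply/existsP; rewrite -negb_forall.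
apply: contraTN small => /forallP all_s; rewrite -leqNgt -{1}(card_ord n).
by apply/subset_leq_card/fintype.subsetP => x _; apply: all_s.
Qed.

Section FreeIndex.
Variables (n : nat) (C : tup R n.+1) (o : 'I_n.+1).
Hypotheses (C_antisym : antisym C) (C_inv : rot_invariant C) (o_neq0 : o != ord0).

Lemma repeated_entry (a b m : 'I_n.+1) : m != ord0 -> m \notin [:: a; a; b] ->
  a != b -> C a a b = C o o ord0 * xi a a b.
Proof.
move=> m0 m_notin ab; rewrite /xi eqxx mul1r.
have [b0 | b0] := eqVneq b ord0.
  rewrite b0 in ab *.
  by rewrite (diag_entry_eq C_inv ab o_neq0) eq_sym (negbTE ab) /=; ring.
have -> : C a a b = 0.
  apply: (half_turn_entry0 (p := b) (m := m) C_inv); rewrite ?ord_gt0 ?(negbTE ab) ?eqxx //.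
  by apply: contraNneq m_notin => ->; rewrite !inE eqxx !orbT.
by rewrite (negbTE ab) /=; ring.
Qed.

Lemma distinct_entry0 (mu a b m : 'I_n.+1) : m != ord0 -> m \notin [:: mu; a; b] ->
  uniq [:: mu; a; b] -> C mu a b = 0.
Proof.
move=> m0 m_notin; rewrite /= !inE !negb_or andbT => /andP[/andP[mua mub] ab].
have neq_m p : p \in [:: mu; a; b] -> p != m by apply: contraTneq => ->.
have [mu0 | mu_neq0] := eqVneq mu ord0.
  apply: (half_turn_entry0 (p := a) (m := m) C_inv); rewrite ?ord_gt0 ?eqxx //.
  - by rewrite -mu0 eq_sym.
  - by apply: neq_m; rewrite !inE eqxx orbT.
  - by rewrite (negbTE mua) (eq_sym b) (negbTE ab).
apply: (half_turn_entry0 (p := mu) (m := m) C_inv); rewrite ?ord_gt0 ?eqxx //.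
- by apply: neq_m; rewrite !inE eqxx.
- by rewrite (eq_sym a) (negbTE mua) (eq_sym b) (negbTE mub).
Qed.

Lemma entry_xi (mu a b : 'I_n.+1) : (#|[:: ord0; mu; a; b]| < n.+1)%N ->
  C mu a b = C o o ord0 * xi mu a b.
Proof.
case/exists_notin => m; rewrite inE negb_or => /andP[m0 m_notin].
have [<- | ab] := eqVneq a b.
  have -> : C mu a a = 0 by have := C_antisym mu a a; lra.
  by rewrite /xi; ring.
have [mua | mua] := eqVneq mu a.
  by rewrite mua in m_notin *; exact: repeated_entry m0 m_notin ab.
have [mub | mub] := eqVneq mu b.
  rewrite mub in m_notin *.
  rewrite C_antisym xi_antisym (repeated_entry m0) 1?eq_sym ?mulrN //.
  by move: m_notin; rewrite !inE; case: (m == b); case: (m == a).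
rewrite (distinct_entry0 m0 m_notin) ?xi_distinct /= ?inE ?negb_or ?mua ?mub ?ab //.
by rewrite mulr0.
Qed.
End FreeIndex.


Lemma inter_E_Xi n : (5 <= n)%N -> forall C : tup R n,
  inter_E n C <-> C \in <<[:: Xi n]>>%VS.
Proof.
case: n => // n n5 C; have n3 : (2 < n.+1)%N by apply: leq_trans n5.
split.
  case/(inter_EP _ n3) => C_antisym C_inv.
  have o_neq0 : ord_max != ord0 :> 'I_n.+1 by rewrite -ord_gt0 /=; lia.
  suff -> : C = C ord_max ord_max ord0 *: Xi n.+1 by rewrite memvZ ?memv_span1.
  apply/ffunP => mu; apply/matrixP => a b; rewrite !ffunE !mxE XiE.
  by apply: entry_xi => //; apply: leq_ltn_trans n5; apply: card_size.
apply: span_ind => [|c x y|x]; [exact: inter_E0 | exact: inter_E_lin |].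
rewrite inE => /eqP ->; apply/inter_EP => //.
by split; [exact: Xi_antisym | exact: Xi_rot_invariant].
Qed.

Lemma tens0 n (v : 'cV[R]_n) : tens v 0 = 0.
Proof. by apply/ffunP => mu; rewrite !ffunE scaler0. Qed.

Lemma eA_diag n a : eA R n a a = 0.
Proof. exact: subrr. Qed.

Lemma tup_comb2E n (x y : R) (P Q : tup R n) mu a b :
  (x *: P + y *: Q) mu a b = x * P mu a b + y * Q mu a b.
Proof. by rewrite !ffunE !mxE. Qed.

Lemma tup_comb3E n (x y z : R) (P Q S : tup R n) mu a b :
  (x *: P + y *: Q + z *: S) mu a b = x * P mu a b + y * Q mu a b + z * S mu a b.
Proof. by rewrite !ffunE !mxE. Qed.

Section DimensionThree.

Notation O31 := (@Ordinal 3 1 isT).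
Notation O32 := (@Ordinal 3 2 isT).

Lemma ord3_cases (x : 'I_3) : [\/ x = ord0, x = O31 | x = O32].
Proof.
by case: x => [[|[|[|?]]] ?] //; [apply: Or31 | apply: Or32 | apply: Or33]; exact: val_inj.
Qed.

Definition Xi_twist3 : tup R 3 := tens (e R 3 2) (eA R 3 3 1) - tens (e R 3 3) (eA R 3 2 1).
Definition axial3 : tup R 3 := tens (e R 3 1) (eA R 3 2 3).

Lemma Xi3 : Xi 3 = tens (e R 3 2) (eA R 3 2 1) + tens (e R 3 3) (eA R 3 3 1).
Proof.
rewrite /Xi (big_ltn (isT : 1 < 4)%N) (big_ltn (isT : 2 < 4)%N).
by rewrite big_nat1 eA_diag tens0 add0r.
Qed.

Lemma Xi_twist3E mu a b : Xi_twist3 mu a b =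
  (mu.+1 == 2)%:R * ((a.+1 == 3)%:R * (b.+1 == 1)%:R - (a.+1 == 1)%:R * (b.+1 == 3)%:R)
  - (mu.+1 == 3)%:R * ((a.+1 == 2)%:R * (b.+1 == 1)%:R - (a.+1 == 1)%:R * (b.+1 == 2)%:R).
Proof. by rewrite !ffunE !mxE !big_ord1 !mxE. Qed.

Lemma axial3E mu a b : axial3 mu a b =
  (mu.+1 == 1)%:R * ((a.+1 == 2)%:R * (b.+1 == 3)%:R - (a.+1 == 3)%:R * (b.+1 == 2)%:R).
Proof. by rewrite !ffunE !mxE !big_ord1 !mxE. Qed.

Lemma Xi_twist3_invariant t : rho (grot 3 2 3 t) Xi_twist3 = Xi_twist3.
Proof.
have trig := cos2Dsin2 t; apply/ffunP => mu; apply/matrixP => a b.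
rewrite (@rho_grotE 3 O31 O32) //.
by case: (ord3_cases mu) => ->; case: (ord3_cases a) => ->; case: (ord3_cases b) => ->;
  rewrite /rotate /= !Xi_twist3E /=; nra.
Qed.

Lemma axial3_invariant t : rho (grot 3 2 3 t) axial3 = axial3.
Proof.
have trig := cos2Dsin2 t; apply/ffunP => mu; apply/matrixP => a b.
rewrite (@rho_grotE 3 O31 O32) //.
by case: (ord3_cases mu) => ->; case: (ord3_cases a) => ->; case: (ord3_cases b) => ->;
  rewrite /rotate /= !axial3E /=; nra.
Qed.

Lemma inter_E3P (C : tup R 3) : inter_E 3 C <-> in_Eij 3 2 3 C.
Proof.
split=> [|C23 i j i2 ij j3]; first exact.
by have [-> ->] : i = 2%N /\ j = 3%N by lia.
Qed.

Lemma in_E23_span (C : tup R 3) :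
  in_Eij 3 2 3 C <-> C \in <<[:: Xi 3; Xi_twist3; axial3]>>%VS.
Proof.
split.
  case=> /in_sonP C_antisym inv.
  have quarter := quarter_turn_entry (isT : O31 != O32) (inv (pi / 2)).
  have half := half_turn_entry (isT : O31 != O32) (inv pi).
  suff -> : C = C O31 O31 ord0 *: Xi 3 + C O31 O32 ord0 *: Xi_twist3
                + C ord0 O31 O32 *: axial3.
    by rewrite !memvD ?memvZ ?memv_span // !inE eqxx ?orbT.
  apply/ffunP => mu; apply/matrixP => a b; rewrite tup_comb3E XiE Xi_twist3E axial3E.
  move: (half mu a b) (quarter mu a b) (quarter mu b a) (C_antisym mu a b).
  case: (ord3_cases mu) => ->; case: (ord3_cases a) => ->; case: (ord3_cases b) => ->;
  by rewrite /xi /sign_pihalf /transp /sign_pi /=; lra.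
apply: span_ind => [|c x y|x]; [exact: in_Eij0 | exact: in_Eij_lin |].
rewrite !inE => /or3P[] /eqP ->; split=> [|t].
- by apply/in_sonP; exact: Xi_antisym.
- exact: (@Xi_rot_invariant 2 O31 O32).
- by apply/in_sonP => mu a b; rewrite !Xi_twist3E; ring.
- exact: Xi_twist3_invariant.
- by apply/in_sonP => mu a b; rewrite !axial3E; ring.
- exact: axial3_invariant.
Qed.

End DimensionThree.

Section DimensionFour.

Notation O41 := (@Ordinal 4 1 isT).
Notation O42 := (@Ordinal 4 2 isT).
Notation O43 := (@Ordinal 4 3 isT).

Lemma ord4_cases (x : 'I_4) : [\/ x = ord0, x = O41, x = O42 | x = O43].
Proof.
case: x => [[|[|[|[|?]]]] ?] //; [apply: Or41 | apply: Or42 | apply: Or43 | apply: Or44];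
  exact: val_inj.
Qed.

Definition levi4 : tup R 4 :=
  tens (e R 4 2) (eA R 4 3 4) - tens (e R 4 3) (eA R 4 2 4) + tens (e R 4 4) (eA R 4 2 3).

Lemma Xi4 : Xi 4 =
  tens (e R 4 2) (eA R 4 2 1) + tens (e R 4 3) (eA R 4 3 1) + tens (e R 4 4) (eA R 4 4 1).
Proof.
rewrite /Xi (big_ltn (isT : 1 < 5)%N) (big_ltn (isT : 2 < 5)%N) (big_ltn (isT : 3 < 5)%N).
by rewrite big_nat1 eA_diag tens0 add0r !addrA.
Qed.

Lemma levi4E mu a b : levi4 mu a b =
  (mu.+1 == 2)%:R * ((a.+1 == 3)%:R * (b.+1 == 4)%:R - (a.+1 == 4)%:R * (b.+1 == 3)%:R)
  - (mu.+1 == 3)%:R * ((a.+1 == 2)%:R * (b.+1 == 4)%:R - (a.+1 == 4)%:R * (b.+1 == 2)%:R)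
  + (mu.+1 == 4)%:R * ((a.+1 == 2)%:R * (b.+1 == 3)%:R - (a.+1 == 3)%:R * (b.+1 == 2)%:R).
Proof. by rewrite !ffunE !mxE !big_ord1 !mxE. Qed.

Lemma levi4_antisym : antisym levi4.
Proof. by move=> mu a b; rewrite !levi4E; ring. Qed.

Lemma levi4_rot_invariant : rot_invariant levi4.
Proof.
move=> k l /andP[k0 kl] t; have trig := cos2Dsin2 t.
have neq_kl : k != l by rewrite neq_ltn kl.
apply/ffunP => mu; apply/matrixP => a b; rewrite rho_grotE //.
case: (ord4_cases k) k0 kl neq_kl => -> // _; case: (ord4_cases l) => -> // _ _;
  by case: (ord4_cases mu) => ->; case: (ord4_cases a) => ->; case: (ord4_cases b) => ->;
    rewrite /rotate /= !levi4E /=; nra.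
Qed.

Lemma inter_E4_span (C : tup R 4) : inter_E 4 C <-> C \in <<[:: Xi 4; levi4]>>%VS.
Proof.
split; last first.
  apply: span_ind => [|c x y|x]; [exact: inter_E0 | exact: inter_E_lin |].
  rewrite !inE => /orP[] /eqP -> //; apply/inter_EP => //; split.
  - exact: Xi_antisym.
  - exact: Xi_rot_invariant.
  - exact: levi4_antisym.
  - exact: levi4_rot_invariant.
case/(inter_EP C isT) => C_antisym C_inv.
have q12 := quarter_turn_entry (isT : O41 != O42) (C_inv O41 O42 isT (pi / 2)).
have q13 := quarter_turn_entry (isT : O41 != O43) (C_inv O41 O43 isT (pi / 2)).
have C213 : C O42 O41 O43 = - C O41 O42 O43 by rewrite q12 /sign_pihalf /transp /=; ring.
have C312 : C O43 O41 O42 = C O41 O42 O43.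
  by rewrite q13 /sign_pihalf /transp /= C_antisym; ring.
have nongeneric mu a b :
    ~~ uniq [:: ord0; mu; a; b] -> C mu a b = C O41 O41 ord0 * xi mu a b.
  move=> ngen; apply: entry_xi => //.
  by rewrite ltn_neqAle card_size andbT; apply: contra ngen => /eqP/card_uniqP.
suff -> : C = C O41 O41 ord0 *: Xi 4 + C O41 O42 O43 *: levi4.
  by rewrite memvD ?memvZ ?memv_span // !inE eqxx ?orbT.
apply/ffunP => mu; apply/matrixP => a b; rewrite tup_comb2E XiE levi4E.
move: (nongeneric mu a b) (C_antisym mu a b); clear q12 q13.
case: (ord4_cases mu) => ->; case: (ord4_cases a) => ->; case: (ord4_cases b) => ->;
  rewrite /xi /= => nongen anti; first [have {}nongen := nongen isT | clear nongen]; lra.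
Qed.

End DimensionFour.
End Invariants.

Theorem mainTheorem1 (R : realType) :
  (forall C : tup R 3,
      (inter_E _ C <-> in_Eij 3 2 3 C) /\
      (in_Eij 3 2 3 C <->
       C \in <<[:: (tens (e R 3 2) (eA R 3 2 1) + tens (e R 3 3) (eA R 3 3 1))%R;
                   (tens (e R 3 2) (eA R 3 3 1) - tens (e R 3 3) (eA R 3 2 1))%R;
                   tens (e R 3 1) (eA R 3 2 3)]>>%VS)) /\
  (forall C : tup R 4,
      inter_E _ C <->
      C \in <<[:: (tens (e R 4 2) (eA R 4 2 1) + tens (e R 4 3) (eA R 4 3 1)
                    + tens (e R 4 4) (eA R 4 4 1))%R;
                  (tens (e R 4 2) (eA R 4 3 4) - tens (e R 4 3) (eA R 4 2 4)
                    + tens (e R 4 4) (eA R 4 2 3))%R]>>%VS) /\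
  (forall n : nat, (5 <= n)%N -> forall C : tup R n,
      inter_E _ C <->
      C \in <<[:: (\sum_(1 <= k < n.+1) tens (e R n k) (eA R n k 1))%R]>>%VS).
Proof.
split; [|split].
- move=> C; rewrite -Xi3; split; [exact: inter_E3P | exact: in_E23_span].
- by move=> C; rewrite -Xi4; exact: inter_E4_span.
- exact: inter_E_Xi.
Qed.
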